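(* Let $X$ be a real vector space of dimension $\geq 3$ and let $P,R:X\to X$ be (not necessarily linear) mappings such that $P^2=P$, $R^2=R$ and $P+R=I$ (the identity). Write $\mathcal P=PX$ and $\mathcal R=RX$. Then: (i) $PR=RP=0$; (ii) $\mathcal P\cap\mathcal R=\{0\}$ and $\mathcal P+\mathcal R=X$; (iii) $P0=R0=0$; (iv) $Px-Rx=0$ if and only if $x=0$.
   Context: Such a pair $P,R$ is called a pair of mutually polar retractions; $0$ denotes the zero mapping. *)

From HB Require Import structures.
From mathcomp Require Import all_boot all_order all_algebra.
From mathcomp Require Import reals.
Set Implicit Arguments. Unset Strict Implicit. Unset Printing Implicit Defensive.
Import Order.TTheory GRing.Theory Num.Theory.
Local Open Scope ring_scope.

(* X has (algebraic) dimension at least 3: it contains three linearly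
   independent vectors (this covers infinite dimension as well). *)
Definition dim_ge3 (R : realType) (X : lmodType R) : Prop :=
  exists x1 x2 x3 : X, forall a b c : R,
    a *: x1 + b *: x2 + c *: x3 = 0 -> [/\ a = 0, b = 0 & c = 0].

Definition in_image (X : Type) (f : X -> X) (y : X) : Prop := exists x, y = f x.

From HB Require Import structures.
From mathcomp Require Import all_boot all_order all_algebra.
From mathcomp Require Import reals.
Import Order.TTheory GRing.Theory Num.Theory.
Set Implicit Arguments.
Unset Strict Implicit.
Local Open Scope ring_scope.

(* Applying P + Q = I to Q x gives P (Q x) + Q x = Q x, so P Q = 0, and
   symmetrically Q P = 0.  A vector y = P a = Q b in both images is then
   y = P (P a) = P (Q b) = 0, and P x = Q x forces P x to lie in both images. *)

Section ComplementaryRetractions.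

Variables (V : zmodType) (P Q : V -> V).
Hypothesis PK : forall x, P (P x) = P x.
Hypothesis QK : forall x, Q (Q x) = Q x.
Hypothesis PQ_id : forall x, P x + Q x = x.

Lemma PQ_eq0 x : P (Q x) = 0.
Proof. by apply: (addIr (Q x)); rewrite add0r -[RHS]PQ_id QK. Qed.

Lemma QP_eq0 x : Q (P x) = 0.
Proof. by apply: (addrI (P x)); rewrite addr0 -[RHS]PQ_id PK. Qed.

Lemma P0 : P 0 = 0.
Proof. by rewrite -[X in P X](QP_eq0 0) PQ_eq0. Qed.

Lemma Q0 : Q 0 = 0.
Proof. by rewrite -[X in Q X](PQ_eq0 0) QP_eq0. Qed.

Lemma in_image_PQ_eq0 y : in_image P y -> in_image Q y -> y = 0.
Proof. by move=> [a ->] [b PaQb]; rewrite -PK PaQb PQ_eq0. Qed.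

Lemma in_image_PQ_decomp x :
  exists p r, [/\ in_image P p, in_image Q r & x = p + r].
Proof. by exists (P x), (Q x); split; [exists x | exists x | rewrite PQ_id]. Qed.

Lemma subPQ_eq0 x : P x - Q x = 0 <-> x = 0.
Proof.
split; last by move->; rewrite P0 Q0 subrr.
move/eqP; rewrite subr_eq0 => /eqP PQx.
have Px0 : P x = 0 by apply: in_image_PQ_eq0; [exists x | exists x].
by rewrite -(PQ_id x) -PQx Px0 addr0.
Qed.

End ComplementaryRetractions.

Theorem proposition1 (R : realType) (X : lmodType R) (P Q : X -> X)
  (hdim : dim_ge3 X)
  (hP : forall x, P (P x) = P x)
  (hQ : forall x, Q (Q x) = Q x)
  (hPQ : forall x, P x + Q x = x) :
  (* (i) PR = RP = 0 *)
  (forall x, P (Q x) = 0 /\ Q (P x) = 0) /\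
  (* (ii) PX ∩ RX = {0} and PX + RX = X *)
  ((forall y, in_image P y -> in_image Q y -> y = 0) /\
   in_image P 0 /\ in_image Q 0 /\
   (forall x, exists p r, [/\ in_image P p, in_image Q r & x = p + r])) /\
  (* (iii) P0 = R0 = 0 *)
  (P 0 = 0 /\ Q 0 = 0) /\
  (* (iv) Px - Rx = 0 iff x = 0 *)
  (forall x, P x - Q x = 0 <-> x = 0).
Proof.
have PQ0 := PQ_eq0 hQ hPQ; have QP0 := QP_eq0 hP hPQ.
split; first by move=> x; rewrite PQ0 QP0.
split.
  split; first exact: in_image_PQ_eq0 hP hQ hPQ.
  split; first by exists (Q 0); rewrite PQ0.
  split; first by exists (P 0); rewrite QP0.
  exact: in_image_PQ_decomp hPQ.
split; first by split; [exact: P0 hP hQ hPQ | exact: Q0 hP hQ hPQ].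
exact: subPQ_eq0 hP hQ hPQ.
Qed.
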